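(* Let $(X,\tau)$ be a $\mathbb{B}$-topological space. (i) For every inhabited, saturated and compact $\theta\in\mathbb{B}^X$, the map $\mathrm{sub}_X(\theta,-)\colon\tau\to\mathbb{B}$ is a Scott open $\mathbb{B}$-filter of $\tau$. (ii) For all inhabited, saturated and compact $\theta_1,\theta_2\in\mathbb{B}^X$, $$\mathrm{sub}_X(\theta_2,\theta_1)=\bigwedge_{\lambda\in\tau}\big(\mathrm{sub}_X(\theta_1,\lambda)\to\mathrm{sub}_X(\theta_2,\lambda)\big).$$ (iii) If $(X,\tau)$ is $\mathbb{B}$-sober, then for every Scott open $\mathbb{B}$-filter $F$ of $\tau$ there is a unique inhabited, saturated and compact $\theta\in\mathbb{B}^X$ such that $F(\lambda)=\mathrm{sub}_X(\theta,\lambda)$ for all $\lambda\in\tau$.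
   Context: $\mathbb{B}=\{0,1,tt,ff\}$ is the four-element Boolean algebra with bottom $0$, top $1$, and $tt,ff$ incomparable and complements of each other; $\neg$ is its complement and $a\to b=\neg a\vee b$. For a set $X$, $\mathbb{B}^X$ is the set of maps $X\to\mathbb{B}$ with pointwise order and operations; for $b\in\mathbb{B}$, $b_X$ is the constant map with value $b$; for $x\in X$, $1_x$ is the map sending $x$ to $1$ and all other points to $0$. A $\mathbb{B}$-topology on $X$ is a subset $\tau\subseteq\mathbb{B}^X$ containing all constant maps and closed under arbitrary pointwise joins and finite pointwise meets; its elements are open sets. For $\lambda,\mu\in\mathbb{B}^X$, $\mathrm{sub}_X(\lambda,\mu)=\bigwedge_{x\in X}(\lambda(x)\to\mu(x))$. The specialization $\mathbb{B}$-order is $\Omega(\tau)(x,y)=\bigwedge_{\lambda\in\tau}(\lambda(x)\to\lambda(y))$. $\theta\in\mathbb{B}^X$ is inhabited if $\bigvee_{x\in X}\theta(x)=1$; saturated if $\Omega(\tau)(x,y)\le\theta(x)\to\theta(y)$ for all $x,y\in X$; compact if for every family $\Lambda\subseteq\tau$ directed with respect to the pointwise order, $\mathrm{sub}_X(\theta,\bigvee\Lambda)=\bigvee_{\lambda\in\Lambda}\mathrm{sub}_X(\theta,\lambda)$. A $\mathbb{B}$-filter of $\tau$ is a map $F\colon\tau\to\mathbb{B}$ with $F(b_X)=b$ for all $b\in\mathbb{B}$ and $F(\lambda\wedge\mu)=F(\lambda)\wedge F(\mu)$ for all $\lambda,\mu\in\tau$; it is Scott open if moreover $F(\bigvee\Lambda)=\bigvee_{\lambda\in\Lambda}F(\lambda)$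 for every directed $\Lambda\subseteq\tau$. A $\mathbb{B}$-point of $\tau$ is a frame homomorphism $p\colon\tau\to\mathbb{B}$ (preserving finite meets and arbitrary joins) with $p(b_X)=b$ for all $b\in\mathbb{B}$. $(X,\tau)$ is $\mathbb{B}$-sober if for every $\mathbb{B}$-point $p$ of $\tau$ there is a unique $x\in X$ with $p(\lambda)=\lambda(x)$ for all $\lambda\in\tau$. *)

From Stdlib Require Import Classical ClassicalEpsilon FunctionalExtensionality.

Inductive B : Type := B0 | B1 | Btt | Bff.

Definition bmeet (a b : B) : B :=
  match a, b with
  | B1, x => x | x, B1 => x
  | B0, _ => B0 | _, B0 => B0
  | Btt, Btt => Btt | Bff, Bff => Bff
  | _, _ => B0
  end.

Definition bjoin (a b : B) : B :=
  match a, b with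
  | B0, x => x | x, B0 => x
  | B1, _ => B1 | _, B1 => B1
  | Btt, Btt => Btt | Bff, Bff => Bff
  | _, _ => B1
  end.

Definition bneg (a : B) : B :=
  match a with B0 => B1 | B1 => B0 | Btt => Bff | Bff => Btt end.

Definition bimp (a b : B) : B := bjoin (bneg a) b.

Definition ble (a b : B) : Prop := bmeet a b = a.

Definition bJoin (S : B -> Prop) : B :=
  if excluded_middle_informative (S B1 \/ (S Btt /\ S Bff)) then B1
  else if excluded_middle_informative (S Btt) then Btt
  else if excluded_middle_informative (S Bff) then Bff
  else B0.

Definition bMeet (S : B -> Prop) : B := bneg (bJoin (fun b => S (bneg b))).

Section BX.
Variable X : Type.

Definition BX := X -> B.

Definition constX (b : B) : BX := fun _ => b.

Definition leX (l m : BX) : Prop := forall x, ble (l x) (m x).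
Definition meetX (l m : BX) : BX := fun x => bmeet (l x) (m x).
Definition JoinX (L : BX -> Prop) : BX :=
  fun x => bJoin (fun b => exists l, L l /\ b = l x).

Definition is_Btopology (tau : BX -> Prop) : Prop :=
  (forall b, tau (constX b)) /\
  (forall L : BX -> Prop, (forall l, L l -> tau l) -> tau (JoinX L)) /\
  (forall l m, tau l -> tau m -> tau (meetX l m)).

Definition subX (l m : BX) : B := bMeet (fun b => exists x, b = bimp (l x) (m x)).

Definition Omega (tau : BX -> Prop) (x y : X) : B :=
  bMeet (fun b => exists l, tau l /\ b = bimp (l x) (l y)).

Definition directed (tau : BX -> Prop) (L : BX -> Prop) : Prop :=
  (forall l, L l -> tau l) /\ (exists l, L l) /\
  (forall l m, L l -> L m -> exists n, L n /\ leX l n /\ leX m n).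

Definition inhabited (th : BX) : Prop := bJoin (fun b => exists x, b = th x) = B1.

Definition saturated (tau : BX -> Prop) (th : BX) : Prop :=
  forall x y, ble (Omega tau x y) (bimp (th x) (th y)).

Definition compact (tau : BX -> Prop) (th : BX) : Prop :=
  forall L, directed tau L ->
    subX th (JoinX L) = bJoin (fun b => exists l, L l /\ b = subX th l).

(* B-filter and Scott open B-filter of tau (only values on tau matter) *)
Definition Bfilter (tau : BX -> Prop) (F : BX -> B) : Prop :=
  (forall b, F (constX b) = b) /\
  (forall l m, tau l -> tau m -> F (meetX l m) = bmeet (F l) (F m)).

Definition scott_open_Bfilter (tau : BX -> Prop) (F : BX -> B) : Prop :=
  Bfilter tau F /\
  (forall L, directed tau L -> F (JoinX L) = bJoin (fun b => exists l, L l /\ b = F l)).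

Definition Bpoint (tau : BX -> Prop) (p : BX -> B) : Prop :=
  (forall b, p (constX b) = b) /\
  (forall l m, tau l -> tau m -> p (meetX l m) = bmeet (p l) (p m)) /\
  (forall L, (forall l, L l -> tau l) -> p (JoinX L) = bJoin (fun b => exists l, L l /\ b = p l)).

Definition Bsober (tau : BX -> Prop) : Prop :=
  forall p, Bpoint tau p -> exists! x : X, forall l, tau l -> p l = l x.

End BX.

Arguments constX {X}.
Arguments leX {X}.
Arguments meetX {X}.
Arguments JoinX {X}.
Arguments is_Btopology {X}.
Arguments subX {X}.
Arguments Omega {X}.
Arguments directed {X}.
Arguments inhabited {X}.
Arguments saturated {X}.
Arguments compact {X}.
Arguments Bfilter {X}.
Arguments scott_open_Bfilter {X}.
Arguments Bpoint {X}.
Arguments Bsober {X}.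

(* The Boolean algebra B is isomorphic to Prop x Prop through its atoms tt and ff, so every
   B-valued statement splits into two classical ones, one per coordinate, and a map X -> B into a
   pair of subsets of X.  Coordinatewise, (i) is routine and compactness is exactly Scott
   continuity, and (ii) holds because a saturated set is the intersection of the open sets
   containing it.  For (iii) take the core theta(x) = /\_lambda (F lambda -> lambda x) of F.  If an
   open U contains the core in coordinate i but F U fails there, Zorn's lemma gives an open V
   containing U, maximal with F V failing; the opens not contained in V form a completely prime
   filter in coordinate i, and with evaluation at any point in the other coordinate they define a
   B-point.  Sobriety realises it at a point x, which lies in the core, hence in U and in V,
   although V is contained in itself. *)
From Stdlib Require Import Classical ClassicalEpsilon FunctionalExtensionality.
From mathcomp Require classical_sets.

Set Implicit Arguments.

Definition holds (i : bool) (b : B) : Prop :=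
  match i, b with
  | _, B1 => True | true, Btt => True | false, Bff => True | _, _ => False
  end.

Definition atom (i : bool) : B := if i then Btt else Bff.

Definition Bof (f : bool -> Prop) : B :=
  if excluded_middle_informative (f true) then
    if excluded_middle_informative (f false) then B1 else Btt
  else if excluded_middle_informative (f false) then Bff else B0.

Ltac Bcases :=
  repeat match goal with
  | i : bool |- _ => destruct i
  | b : B |- _ => destruct b
  end; simpl in *; try tauto.

Lemma B_ext a b : (forall i, holds i a <-> holds i b) -> a = b.
Proof. intros H; pose proof (H true); pose proof (H false); Bcases. Qed.

Lemma holds_meet i a b : holds i (bmeet a b) <-> holds i a /\ holds i b.
Proof. Bcases. Qed.

Lemma holds_join i a b : holds i (bjoin a b) <-> holds i a \/ holds i b.
Proof. Bcases. Qed.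

Lemma holds_neg i a : holds i (bneg a) <-> ~ holds i a.
Proof. Bcases. Qed.

Lemma holds_imp i a b : holds i (bimp a b) <-> (holds i a -> holds i b).
Proof. unfold bimp; rewrite holds_join, holds_neg; destruct (classic (holds i a)); tauto. Qed.

Lemma holds_atom i k : holds i (atom k) <-> i = k.
Proof. destruct i, k; simpl; intuition discriminate. Qed.

Lemma holds_B0 i : ~ holds i B0.
Proof. Bcases. Qed.

Lemma holds_B1 i : holds i B1.
Proof. Bcases. Qed.

Lemma holds_Bof i f : holds i (Bof f) <-> f i.
Proof. unfold Bof; repeat destruct excluded_middle_informative; destruct i; simpl; tauto. Qed.

Lemma ble_holds a b : ble a b <-> forall i, holds i a -> holds i b.
Proof.
  unfold ble; split.
  - intros H i; rewrite <- H, holds_meet; tauto.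
  - intros H; apply B_ext; intros i; rewrite holds_meet; specialize (H i); tauto.
Qed.

Lemma holds_bJoin i S : holds i (bJoin S) <-> exists b, S b /\ holds i b.
Proof.
  unfold bJoin.
  destruct excluded_middle_informative as [[H | [Htt Hff]] | H1].
  { split; [intros _; exists B1; split; [exact H | apply holds_B1] | intros; apply holds_B1]. }
  { split; [intros _; destruct i; [exists Btt | exists Bff]; simpl; auto | intros; apply holds_B1]. }
  destruct excluded_middle_informative as [H2 | H2];
    [| destruct excluded_middle_informative as [H3 | H3]];
    (split; [intros Hi; Bcases; eauto |
             intros [b [Hb Hi]]; destruct b; Bcases; apply H1; tauto]).
Qed.

Lemma holds_bMeet i S : holds i (bMeet S) <-> forall b, S b -> holds i b.
Proof.
  unfold bMeet; rewrite holds_neg, holds_bJoin; split.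
  - intros H b Hb; apply NNPP; intros Hn; apply H; exists (bneg b).
    rewrite holds_neg; destruct b; simpl in *; auto.
  - intros H [b [Hb Hi]]; apply H in Hb; rewrite holds_neg in Hb; auto.
Qed.

Section Pointwise.
Variable X : Type.
Implicit Types (l m th : X -> B) (L : (X -> B) -> Prop).

Definition sub_at i l m : Prop := forall x, holds i (l x) -> holds i (m x).

Definition restrict i l : X -> B := meetX l (constX (atom i)).

Definition joinX l m : X -> B := JoinX (fun w => w = l \/ w = m).

Lemma BX_ext l m : (forall i x, holds i (l x) <-> holds i (m x)) -> l = m.
Proof. intros H; apply functional_extensionality; intros x; apply B_ext; auto. Qed.

Lemma holds_subX i l m : holds i (subX l m) <-> sub_at i l m.
Proof.
  unfold subX, sub_at; rewrite holds_bMeet; split.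
  - intros H x; rewrite <- holds_imp; apply H; eauto.
  - intros H b [x ->]; rewrite holds_imp; auto.
Qed.

Lemma holds_JoinX i L x : holds i (JoinX L x) <-> exists l, L l /\ holds i (l x).
Proof.
  unfold JoinX; rewrite holds_bJoin; split.
  - intros [b [[l [Hl ->]] Hi]]; eauto.
  - intros [l [Hl Hi]]; eauto.
Qed.

Lemma holds_joinX i l m x : holds i (joinX l m x) <-> holds i (l x) \/ holds i (m x).
Proof.
  unfold joinX; rewrite holds_JoinX; split.
  - intros [w [[-> | ->] Hw]]; auto.
  - intros [H | H]; eauto.
Qed.

Lemma holds_restrict i k l x : holds k (restrict i l x) <-> k = i /\ holds k (l x).
Proof. unfold restrict, meetX, constX; rewrite holds_meet, holds_atom; tauto. Qed.

Lemma holds_Omega i tau x y :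
  holds i (Omega tau x y) <-> forall l, tau l -> holds i (l x) -> holds i (l y).
Proof.
  unfold Omega; rewrite holds_bMeet; split.
  - intros H l Hl; rewrite <- holds_imp; apply H; eauto.
  - intros H b [l [Hl ->]]; rewrite holds_imp; auto.
Qed.

Lemma inhabited_holds th : inhabited th <-> forall i, exists x, holds i (th x).
Proof.
  unfold inhabited; split.
  - intros H i; pose proof (holds_B1 i) as H1; rewrite <- H, holds_bJoin in H1.
    destruct H1 as [b [[x ->] Hi]]; eauto.
  - intros H; apply B_ext; intros i; rewrite holds_bJoin; split; [intros; apply holds_B1 |].
    intros _; destruct (H i) as [x Hx]; eauto.
Qed.

Lemma leX_holds l m : leX l m <-> forall i, sub_at i l m.
Proof.
  unfold leX, sub_at; split.
  - intros H i x; apply ble_holds, H.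
  - intros H x; apply ble_holds; auto.
Qed.

Lemma leX_restrict i l m : sub_at i l m -> leX (restrict i l) (restrict i m).
Proof.
  intros H; apply leX_holds; intros k x; rewrite !holds_restrict.
  intros [-> Hl]; auto.
Qed.

Lemma bJoin_ext (S S' : B -> Prop) : (forall b, S b <-> S' b) -> bJoin S = bJoin S'.
Proof. intros H; apply B_ext; intros i; rewrite !holds_bJoin; firstorder. Qed.

End Pointwise.

Section Topology.
Variable X : Type.
Variable tau : (X -> B) -> Prop.
Hypothesis Htau : is_Btopology tau.
Implicit Types (l m th : X -> B) (L : (X -> B) -> Prop).

Lemma tau_const b : tau (constX b).
Proof. apply Htau. Qed.

Lemma tau_JoinX L : (forall l, L l -> tau l) -> tau (JoinX L).
Proof. apply Htau. Qed.

Lemma tau_meetX l m : tau l -> tau m -> tau (meetX l m).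
Proof. apply Htau. Qed.

Lemma tau_joinX l m : tau l -> tau m -> tau (joinX l m).
Proof. intros Hl Hm; apply tau_JoinX; intros w [-> | ->]; auto. Qed.

#[local] Hint Resolve tau_const tau_meetX tau_joinX : core.

Lemma tau_restrict i l : tau l -> tau (restrict i l).
Proof. intros Hl; apply tau_meetX; auto. Qed.

#[local] Hint Resolve tau_restrict : core.

Lemma subX_scott_open_Bfilter th :
  inhabited th -> compact tau th -> scott_open_Bfilter tau (subX th).
Proof.
  intros Hi Hc; split; [split |].
  - intros b; apply B_ext; intros i; rewrite holds_subX; unfold sub_at, constX; split.
    + destruct (proj1 (inhabited_holds th) Hi i) as [x Hx]; eauto.
    + auto.
  - intros l m _ _; apply B_ext; intros i; rewrite holds_meet, !holds_subX.
    unfold sub_at, meetX; setoid_rewrite holds_meet; firstorder.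
  - exact Hc.
Qed.

(* The join of the opens missing [y] contains [th1] by saturation, but would contain [y]. *)
Lemma saturated_sub_at i th1 th2 : saturated tau th1 ->
  (forall l, tau l -> sub_at i th1 l -> sub_at i th2 l) -> sub_at i th2 th1.
Proof.
  intros Hs H y Hy; apply NNPP; intros Hny.
  set (L := fun m => tau m /\ ~ holds i (m y)).
  assert (Hth1 : sub_at i th1 (JoinX L)).
  { intros x Hx; rewrite holds_JoinX; apply NNPP; intros Hno.
    pose proof (proj1 (ble_holds _ _) (Hs x y) i) as Hsi.
    rewrite holds_Omega, holds_imp in Hsi; apply Hny, Hsi; auto.
    intros l Hl Hlx; apply NNPP; intros Hly; apply Hno; exists l; repeat split; auto. }
  assert (HL : tau (JoinX L)) by (apply tau_JoinX; intros l []; auto).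
  destruct (proj1 (holds_JoinX _ _ _) (H _ HL Hth1 y Hy)) as [l [[_ Hl] Hly]]; auto.
Qed.

Lemma subX_eq_bMeet_opens th1 th2 : saturated tau th1 ->
  subX th2 th1 = bMeet (fun b => exists l, tau l /\ b = bimp (subX th1 l) (subX th2 l)).
Proof.
  intros Hs; apply B_ext; intros i; rewrite holds_subX, holds_bMeet; split.
  - intros H b [l [Hl ->]]; rewrite holds_imp, !holds_subX; intros H1 x Hx; auto.
  - intros H; apply saturated_sub_at; [exact Hs |].
    intros l Hl; rewrite <- !holds_subX, <- holds_imp; apply H; eauto.
Qed.

Lemma saturated_subX_inj th1 th2 : saturated tau th1 -> saturated tau th2 ->
  (forall l, tau l -> subX th1 l = subX th2 l) -> th1 = th2.
Proof.
  intros Hs1 Hs2 H; apply BX_ext; intros i x; split; revert x.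
  - apply saturated_sub_at; auto; intros l Hl; rewrite <- !holds_subX, H; auto.
  - apply saturated_sub_at; auto; intros l Hl; rewrite <- !holds_subX, H; auto.
Qed.

Definition prime_at i (q : (X -> B) -> Prop) : Prop :=
  (forall b, q (constX b) <-> holds i b) /\
  (forall l m, tau l -> tau m -> (q (meetX l m) <-> q l /\ q m)) /\
  (forall L, (forall l, L l -> tau l) -> (q (JoinX L) <-> exists l, L l /\ q l)).

Lemma Bpoint_of_prime_at (q : bool -> (X -> B) -> Prop) :
  (forall i, prime_at i (q i)) -> Bpoint tau (fun l => Bof (fun i => q i l)).
Proof.
  intros Hq; split; [| split].
  - intros b; apply B_ext; intros i; rewrite holds_Bof; apply Hq.
  - intros l m Hl Hm; apply B_ext; intros i; rewrite holds_meet, !holds_Bof; apply Hq; auto.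
  - intros L HL; apply B_ext; intros i.
    rewrite holds_bJoin, holds_Bof, (proj2 (proj2 (Hq i)) L HL); split.
    + intros [l [Hl Hql]]; exists (Bof (fun k => q k l)); rewrite holds_Bof; eauto.
    + intros [b [[l [Hl ->]] Hb]]; rewrite holds_Bof in Hb; eauto.
Qed.

Lemma prime_at_eval i x : prime_at i (fun l => holds i (l x)).
Proof.
  split; [| split].
  - reflexivity.
  - intros l m _ _; apply holds_meet.
  - intros L _; apply holds_JoinX.
Qed.

Section ScottOpenFilter.
Variable F : (X -> B) -> B.
Hypothesis HF : scott_open_Bfilter tau F.

Lemma F_const b : F (constX b) = b.
Proof. apply HF. Qed.

Lemma F_meetX l m : tau l -> tau m -> F (meetX l m) = bmeet (F l) (F m).
Proof. apply HF. Qed.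

Lemma F_mono i l m : tau l -> tau m -> leX l m -> holds i (F l) -> holds i (F m).
Proof.
  intros Hl Hm Hle H.
  assert (Hlm : meetX l m = l).
  { apply BX_ext; intros k x; unfold meetX; rewrite holds_meet.
    pose proof (proj1 (leX_holds l m) Hle k x); tauto. }
  rewrite <- Hlm, F_meetX, holds_meet in H by auto; tauto.
Qed.

Lemma F_restrict i l : tau l -> holds i (F (restrict i l)) <-> holds i (F l).
Proof.
  intros Hl; unfold restrict.
  rewrite F_meetX, F_const, holds_meet, holds_atom by auto.
  intuition.
Qed.

Lemma F_mono_at i l m : tau l -> tau m -> sub_at i l m -> holds i (F l) -> holds i (F m).
Proof.
  intros Hl Hm Hlm; rewrite <- (F_restrict i Hl), <- (F_restrict i Hm).
  apply F_mono; auto using leX_restrict.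
Qed.

Lemma carrier_inhabited : Logic.inhabited X.
Proof.
  apply NNPP; intros Hn.
  assert (H01 : constX B0 = constX (X := X) B1).
  { apply functional_extensionality; intros x; exfalso; apply Hn; constructor; exact x. }
  pose proof (F_const B0) as H; rewrite H01, F_const in H; discriminate.
Qed.

Definition filter_core (x : X) : B :=
  bMeet (fun b => exists l, tau l /\ b = bimp (F l) (l x)).

Lemma holds_filter_core i x :
  holds i (filter_core x) <-> forall l, tau l -> holds i (F l) -> holds i (l x).
Proof.
  unfold filter_core; rewrite holds_bMeet; split.
  - intros H l Hl; rewrite <- holds_imp; apply H; eauto.
  - intros H b [l [Hl ->]]; rewrite holds_imp; auto.
Qed.

Lemma filter_core_saturated : saturated tau filter_core.
Proof.
  intros x y; apply ble_holds; intros i; rewrite holds_Omega, holds_imp, !holds_filter_core.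
  intros Hxy Hx l Hl HFl; auto.
Qed.

Lemma sub_at_filter_core i l : tau l -> holds i (F l) -> sub_at i filter_core l.
Proof. intros Hl HFl x Hx; apply holds_filter_core with (l := l) in Hx; auto. Qed.

(* [S] joined with [U] is coordinate [i] of an open outside [F]; joining [U] makes the empty chain
   harmless in Zorn's lemma. *)
Definition outside_F_extension i U (S : X -> Prop) : Prop :=
  exists W, tau W /\ (forall x, holds i (W x) <-> S x \/ holds i (U x)) /\ ~ holds i (F W).

Definition maximal_outside_F i V : Prop :=
  tau V /\ ~ holds i (F V) /\
  forall W, tau W -> sub_at i V W -> ~ sub_at i W V -> holds i (F W).

(* Restricting to the atom [i] makes the pointwise order of the witnesses a chain, so Scott
   continuity applies to their join. *)
Lemma outside_F_extension_chain i U (Fam : (X -> Prop) -> Prop) :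
  tau U -> ~ holds i (F U) ->
  (forall S, Fam S -> outside_F_extension i U S) ->
  (forall S1 S2, Fam S1 -> Fam S2 -> (forall x, S1 x -> S2 x) \/ (forall x, S2 x -> S1 x)) ->
  outside_F_extension i U (fun x => exists2 S, Fam S & S x).
Proof.
  intros HU HnU HFam Htot.
  set (L := fun W' => exists W S, W' = restrict i W /\ tau W /\ (Fam S \/ S = fun _ => False) /\
              (forall x, holds i (W x) <-> S x \/ holds i (U x)) /\ ~ holds i (F W)).
  assert (HLtau : forall W', L W' -> tau W').
  { intros W' (W & S & -> & HW & _); apply tau_restrict; auto. }
  assert (HLU : L (restrict i U)).
  { exists U, (fun _ => False); repeat split; auto; tauto. }
  assert (HLdir : directed tau L).
  { split; [exact HLtau | split; [exists (restrict i U); exact HLU |]].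
    intros l1 l2 Hl1 Hl2.
    pose proof Hl1 as (W1 & S1 & -> & _ & HS1 & HW1 & _).
    pose proof Hl2 as (W2 & S2 & -> & _ & HS2 & HW2 & _).
    assert (HS : (forall x, S1 x -> S2 x) \/ (forall x, S2 x -> S1 x)).
    { destruct HS1 as [HS1 | ->]; [destruct HS2 as [HS2 | ->] |];
        [auto | right | left]; intros x []. }
    assert (HW : sub_at i W1 W2 \/ sub_at i W2 W1).
    { destruct HS as [H | H]; [left | right]; intros x;
        rewrite HW1, HW2; intros [Hx | Hx]; auto. }
    assert (Hrefl : forall W : X -> B, leX W W) by (intros W; apply leX_holds; intros k x; auto).
    destruct HW as [H | H]; [exists (restrict i W2) | exists (restrict i W1)];
      repeat split; auto using leX_restrict. }
  exists (JoinX L); split; [apply tau_JoinX; exact HLtau | split].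
  - intros x; rewrite holds_JoinX; split.
    + intros [W' [(W & S & -> & _ & HS & HW & _) Hx]].
      rewrite holds_restrict, HW in Hx; destruct Hx as [_ [Hx | Hx]]; [| auto].
      destruct HS as [HS | ->]; [left; eauto | contradiction].
    + intros [[S HS Hx] | Hx].
      * destruct (HFam S HS) as (W & HW & HWS & HnW).
        exists (restrict i W); split; [exists W, S; auto | rewrite holds_restrict, HWS; auto].
      * exists (restrict i U); split; [auto | rewrite holds_restrict; auto].
  - destruct HF as [_ Hscott]; rewrite (Hscott L HLdir), holds_bJoin.
    intros [b [[W' [(W & S & -> & HW & _ & _ & HnW) ->]] Hb]].
    apply HnW, F_restrict; auto.
Qed.

Lemma exists_maximal_outside_F i U :
  tau U -> ~ holds i (F U) -> exists V, sub_at i U V /\ maximal_outside_F i V.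
Proof.
  intros HU HnU.
  destruct (@classical_sets.Zorn_bigcup X (outside_F_extension i U)) as [A [HA Amax]].
  { intros Fam HFam Htot; exact (outside_F_extension_chain Fam HU HnU HFam Htot). }
  destruct HA as (V & HV & HVA & HnV).
  exists V; split; [intros x Hx; apply HVA; auto | split; [auto | split; [auto |]]].
  intros W HW HVW HWV; apply NNPP; intros HnW.
  apply (Amax (fun x => holds i (W x))).
  - split.
    + intros x Hx; apply HVW, HVA; auto.
    + intros H; apply HWV; intros x Hx; apply HVA; left; apply H; auto.
  - exists W; split; [auto | split; [| auto]].
    intros x; split; [auto | intros [H | H]; auto; apply HVW, HVA; auto].
Qed.

Lemma prime_at_not_sub_at i V :
  maximal_outside_F i V -> prime_at i (fun W => ~ sub_at i W V).
Proof.
  intros (HV & HnV & Hmax); split; [| split].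
  - intros b; split.
    + intros H; apply NNPP; intros Hb; apply H; intros x Hx; contradiction.
    + intros Hb Hsub; apply HnV.
      apply F_mono_at with (l := constX b); auto; rewrite F_const; exact Hb.
  - intros l m Hl Hm; split.
    + intros H; split; intros Hsub; apply H; intros x Hx; apply Hsub;
        unfold meetX in Hx; rewrite holds_meet in Hx; tauto.
    + intros [Hlv Hmv] Hlm.
      assert (Hjoin : forall n, tau n -> ~ sub_at i n V -> holds i (F (joinX V n))).
      { intros n Hn Hnv; apply Hmax; auto.
        - intros x Hx; apply holds_joinX; auto.
        - intros H; apply Hnv; intros x Hx; apply H, holds_joinX; auto. }
      apply HnV; apply F_mono_at with (l := meetX (joinX V l) (joinX V m)); auto.
      * intros x; unfold meetX; rewrite holds_meet, !holds_joinX.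
        intros [[? | ?] [? | ?]]; auto; apply Hlm; unfold meetX; rewrite holds_meet; auto.
      * rewrite F_meetX, holds_meet; auto.
  - intros L HL; split.
    + intros H; apply NNPP; intros Hn; apply H; intros x Hx.
      apply holds_JoinX in Hx; destruct Hx as [l [Hl Hlx]].
      apply NNPP; intros Hvx; apply Hn; exists l; split; auto.
    + intros [l [Hl Hlv]] Hsub; apply Hlv; intros x Hx; apply Hsub, holds_JoinX; eauto.
Qed.

Section Sober.
Hypothesis Hsob : Bsober tau.

Lemma F_of_sub_at_filter_core i U : tau U -> sub_at i filter_core U -> holds i (F U).
Proof.
  intros HU Hcore; apply NNPP; intros HnU.
  destruct (exists_maximal_outside_F i HU HnU) as (V & HUV & HVmax).
  destruct carrier_inhabited as [x0].
  set (q := fun k => if Bool.eqb k i then fun W => ~ sub_at i W V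
                     else fun W => holds k (W x0)).
  assert (Hq : forall k, prime_at k (q k)).
  { intros k; unfold q; destruct (Bool.eqb_spec k i) as [-> | _].
    - apply prime_at_not_sub_at; auto.
    - apply prime_at_eval. }
  destruct (Hsob (Bpoint_of_prime_at q Hq)) as [x [Hx _]].
  assert (Hxi : forall W, tau W -> holds i (W x) <-> ~ sub_at i W V).
  { intros W HW; rewrite <- (Hx W HW); cbv beta; rewrite holds_Bof.
    unfold q; rewrite Bool.eqb_reflx; tauto. }
  destruct HVmax as (HV & HnV & _).
  assert (HVx : holds i (V x)).
  { apply HUV, Hcore, holds_filter_core; intros l Hl HFl; apply Hxi; auto.
    intros Hsub; apply HnV; apply F_mono_at with (l := l); auto. }
  apply Hxi in HVx; auto; apply HVx; intros y Hy; exact Hy.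
Qed.

Lemma F_eq_subX_filter_core l : tau l -> F l = subX filter_core l.
Proof.
  intros Hl; apply B_ext; intros i; rewrite holds_subX; split.
  - apply sub_at_filter_core; auto.
  - apply F_of_sub_at_filter_core; auto.
Qed.

Lemma filter_core_inhabited : inhabited filter_core.
Proof.
  apply inhabited_holds; intros i; apply NNPP; intros Hn.
  assert (H : holds i (F (constX B0))).
  { apply F_of_sub_at_filter_core; auto.
    intros x Hx; exfalso; apply Hn; eauto. }
  rewrite F_const in H; exact (holds_B0 i H).
Qed.

Lemma filter_core_compact : compact tau filter_core.
Proof.
  intros L HL; rewrite <- F_eq_subX_filter_core by (apply tau_JoinX, HL; auto).
  rewrite (proj2 HF L HL); apply bJoin_ext; intros b.
  split; intros [l [Hl ->]]; exists l; split; auto;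
    [| symmetry]; apply F_eq_subX_filter_core, HL; auto.
Qed.

End Sober.
End ScottOpenFilter.
End Topology.

Theorem mainTheorem1 (X : Type) (tau : (X -> B) -> Prop) (Htau : is_Btopology tau) :
  (* (i) *)
  (forall th : X -> B, inhabited th -> saturated tau th -> compact tau th ->
     scott_open_Bfilter tau (fun l => subX th l)) /\
  (* (ii) *)
  (forall th1 th2 : X -> B,
     inhabited th1 -> saturated tau th1 -> compact tau th1 ->
     inhabited th2 -> saturated tau th2 -> compact tau th2 ->
     subX th2 th1 =
       bMeet (fun b => exists l, tau l /\ b = bimp (subX th1 l) (subX th2 l))) /\
  (* (iii) *)
  (Bsober tau ->
     forall F : (X -> B) -> B, scott_open_Bfilter tau F ->
       exists! th : X -> B,
         inhabited th /\ saturated tau th /\ compact tau th /\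
         (forall l, tau l -> F l = subX th l)).
Proof.
  split; [| split].
  - intros th Hi _ Hc; apply subX_scott_open_Bfilter; auto.
  - intros th1 th2 _ Hs1 _ _ _ _; apply subX_eq_bMeet_opens; auto.
  - intros Hsob F HF; exists (filter_core tau F); split.
    + split; [| split; [| split]].
      * apply filter_core_inhabited; auto.
      * apply (filter_core_saturated tau F).
      * apply filter_core_compact; auto.
      * intros l Hl; apply F_eq_subX_filter_core; auto.
    + intros th (_ & Hs & _ & HFth); apply (saturated_subX_inj Htau); auto.
      * apply (filter_core_saturated tau F).
      * intros l Hl; rewrite <- HFth, (F_eq_subX_filter_core Htau HF Hsob l Hl); auto.
Qed.
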